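(* Let $\mathcal G$ be a constructor GRS over a finite signature $\mathcal F$ that is precedence terminating with argument separation, and let $G_0\in\mathcal{TG}(\mathcal F)$ be a closed basic term graph. If $G_0\to_{\mathcal G}^{*}G$, then for any nodes $v\in\mathrm{SP}_G$ and $u\in\mathrm{nrm}(v)$ we have $G{\restriction}u\sqsubset_{\mathrm{nrm}}G_0$; that is, $G{\restriction}u$ is a sub-term graph (with the same nodes, labels and successors) of $G_0{\restriction}w$ for some $w\in\mathrm{nrm}(\rho_{G_0})$.
   Context: Term graphs. $\mathcal F=\mathcal C\cup\mathcal D$ is a finite signature (constructors and defined symbols, disjoint) with arity function $\mathrm{ar}$. A labeled graph consists of a finite acyclic directed graph $(V_G,E_G)$, a partial labeling $\mathrm{lab}_G:V_G\to\mathcal F$ and a successor function $\mathrm{att}_G:V_G\to V_G^*$ such that $\mathrm{att}_G(v)$ has length $\mathrm{ar}(\mathrm{lab}_G(v))$ if $v$ is labeled and is empty otherwise, and the set of entries of $\mathrm{att}_G(v)$ equals $\{u:(v,u)\in E_G\}$. Unlabeled nodes act as variables. A term graph additionally has a root $\rho_G$ from which every node is reachable; $\mathcal{TG}(\mathcal F)$ is the set of term graphs over $\mathcal F$ and $\mathcal{TG}(\mathcal C)$ those whose labeled nodes carry constructors. $G{\restriction}v$ is the sub-term graph of nodes reachable from $v$, rooted at $v$; $H\subseteq G$ means $H=G{\restriction}v$ for some $v$. $G$ is closed if every node is labeled; basic if $\mathrm{lab}_G(\rho_G)\in\mathcal D$ and $G{\restriction}v\in\mathcal{TG}(\mathcal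 C)$ for every successor $v$ of $\rho_G$. Argument separation. The argument positions of each $f\in\mathcal F$ are split into normal and safe ones; constructors have only safe positions; nodes with the same label have the same separation. $\mathrm{nrm}(v)$ (resp. $\mathrm{safe}(v)$) is the set of successors of $v$ at normal (resp. safe) positions. $H\sqsubset_{\mathrm{nrm}}G$ means $H\subseteq G{\restriction}v$ for some $v\in\mathrm{nrm}(\rho_G)$. Rewriting. Homomorphisms of labeled graphs preserve labels, successor sequences at labeled nodes (nothing required at unlabeled nodes), and the normal/safe split; homomorphisms of term graphs also map root to root. A graph rewrite rule $(K,l,r)$ is a labeled graph $K$ with distinct nodes $l,r$ such that every unlabeled node of $K{\restriction}r$ lies in $K{\restriction}l$; it is a constructor rule if $K{\restriction}l$ is basic. A GRS is a (possibly infinite) set of rules; a constructor GRS consists of constructor rules. For a rule $(K,l,r)$ and homomorphism $\varphi:K{\restriction}l\to G$, the rewrite step $G\to_{\mathcal G}H$ is the standard build/redirection/garbage-collection step: the labeled part of $K{\restriction}r$ not in $K{\restriction}l$ is freshly copied into $G$ (unlabeled nodes mapped via $\varphi$), edges into $\varphi(l)$ (and the root, if it is $\varphi(l)$) are redirected to the image of $r$, and unreachable nodes are removed; other nodes keep their identity. $\to^*_{\mathcal G}$ is the reflexive-transitive closure. Precedence termination with argument separation. A precedence $\sqsubset$ is a well-founded strict partial order on $\mathcal F$ with all constructors minimal. $H\sqsubset_{\mathrm{pt}}G$ holds if $\mathrm{lab}_H(v)\sqsubset\mathrm{lab}_G(\rho_G)$ for every labeled node $v$ of $H$ and either (1) $H=G{\restriction}u$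 or $H\sqsubset_{\mathrm{pt}}G{\restriction}u$ for some successor $u$ of $\rho_G$; or (2) $\rho_H$ is labeled, $H{\restriction}v\sqsubset_{\mathrm{nrm}}G$ for each $v\in\mathrm{nrm}(\rho_H)$, and $H{\restriction}v\sqsubset_{\mathrm{pt}}G$ for each $v\in\mathrm{safe}(\rho_H)$. A GRS is precedence terminating with argument separation if for some argument separation and precedence, $K{\restriction}r\sqsubset_{\mathrm{pt}}K{\restriction}l$ for every rule $(K,l,r)$. Safe paths. A path (sequence of nodes each a successor of the previous) is safe if each next node is a safe successor of the previous; $\mathrm{SP}_G$ is the set of nodes lying on a safe path from $\rho_G$ (including $\rho_G$). *)

From mathcomp Require Import all_boot.
Set Implicit Arguments.
Unset Strict Implicit.
Unset Printing Implicit Defensive.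

(* Nodes are natural numbers (an infinite supply, so fresh nodes exist and
   node identity is meaningful). *)

Section TermGraphs.
Variable F : finType.
Variable ar : F -> nat.
Variable isC : pred F.             (* constructors; D = the complement     *)
Variable normal : F -> nat -> bool. (* argument separation: position i of f is normal *)
Variable prec : rel F.

(* A labeled graph: node set, partial labeling, successor function.
   Values of lab/att outside the node set are irrelevant junk. *)
Record lgraph := LG { node : nat -> Prop; lab : nat -> option F; att : nat -> seq nat }.
Record tgraph := TG { tgr : lgraph; root : nat }.

Inductive reach (G : lgraph) : nat -> nat -> Prop :=
| reach_refl v : reach G v v
| reach_step v u w : u \in att G v -> reach G u w -> reach G v w.

Definition wf_lg (G : lgraph) : Prop :=
  (exists s : seq nat, forall x, node G x -> x \in s) /\
  (forall x, node G x ->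
     size (att G x) = (match lab G x with Some f => ar f | None => 0 end)) /\
  (forall x y, node G x -> y \in att G x -> node G y) /\
  (forall x, node G x -> ~ exists y, y \in att G x /\ reach G y x).

Definition wf_tg (G : tgraph) : Prop :=
  wf_lg (tgr G) /\ node (tgr G) (root G) /\
  (forall x, node (tgr G) x -> reach (tgr G) (root G) x).

Definition geq (A B : lgraph) : Prop :=
  (forall x, node A x <-> node B x) /\
  (forall x, node A x -> lab A x = lab B x /\ att A x = att B x).
Definition tgeq (A B : tgraph) : Prop := geq (tgr A) (tgr B) /\ root A = root B.

Definition restr (G : lgraph) (v : nat) : lgraph := LG (reach G v) (lab G) (att G).
Definition restr_tg (G : tgraph) (v : nat) : tgraph := TG (restr (tgr G) v) v.

Definition subtg (H G : tgraph) : Prop :=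
  exists v, node (tgr G) v /\ tgeq H (restr_tg G v).

Definition closed_tg (G : tgraph) : Prop := forall x, node (tgr G) x -> lab (tgr G) x <> None.

Definition basic (G : tgraph) : Prop :=
  (exists f, lab (tgr G) (root G) = Some f /\ ~~ isC f) /\
  (forall v, v \in att (tgr G) (root G) -> forall x g,
      reach (tgr G) v x -> lab (tgr G) x = Some g -> isC g).

Definition nrm (G : lgraph) (v : nat) : seq nat :=
  match lab G v with
  | Some f => [seq nth 0 (att G v) i | i <- iota 0 (size (att G v)) & normal f i]
  | None => [::] end.
Definition safe (G : lgraph) (v : nat) : seq nat :=
  match lab G v with
  | Some f => [seq nth 0 (att G v) i | i <- iota 0 (size (att G v)) & ~~ normal f i]
  | None => [::] end.

Definition nrmsub (H G : tgraph) : Prop :=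
  exists v, v \in nrm (tgr G) (root G) /\ subtg H (restr_tg G v).

Inductive SP (G : tgraph) : nat -> Prop :=
| SP_root : SP G (root G)
| SP_step v u : SP G v -> u \in safe (tgr G) v -> SP G u.

Definition labs_below (H G : tgraph) : Prop :=
  forall x f, node (tgr H) x -> lab (tgr H) x = Some f ->
    exists g, lab (tgr G) (root G) = Some g /\ prec f g.

Inductive pt : tgraph -> tgraph -> Prop :=
| pt_sub H G u : labs_below H G -> u \in att (tgr G) (root G) ->
    (tgeq H (restr_tg G u) \/ pt H (restr_tg G u)) -> pt H G
| pt_arg H G : labs_below H G -> lab (tgr H) (root H) <> None ->
    (forall v, v \in nrm (tgr H) (root H) -> nrmsub (restr_tg H v) G) ->
    (forall v, v \in safe (tgr H) (root H) -> pt (restr_tg H v) G) -> pt H G.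

Record rule := Rule { rK : lgraph; rl : nat; rr : nat }.

Definition is_rule (R : rule) : Prop :=
  wf_lg (rK R) /\ node (rK R) (rl R) /\ node (rK R) (rr R) /\ rl R <> rr R /\
  (forall x, reach (rK R) (rr R) x -> lab (rK R) x = None -> reach (rK R) (rl R) x).

Definition lhs (R : rule) : tgraph := TG (restr (rK R) (rl R)) (rl R).
Definition rhs (R : rule) : tgraph := TG (restr (rK R) (rr R)) (rr R).

Definition constructor_rule (R : rule) : Prop := is_rule R /\ basic (lhs R).

Definition lhom (A B : lgraph) (phi : nat -> nat) : Prop :=
  (forall x, node A x -> node B (phi x)) /\
  (forall x f, node A x -> lab A x = Some f ->
     lab B (phi x) = Some f /\ att B (phi x) = map phi (att A x)).

(* Build + redirection: H2 is the graph obtained from G by freshly copying the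
   part of K|r not in K|l (via psi, which agrees with phi on K|l), and
   redirecting every edge into phi(l) to psi(r). *)
Definition build_redirect (R : rule) (phi psi : nat -> nat) (G : tgraph)
    (H2 : lgraph) : Prop :=
  let K := rK R in let l := rl R in let r := rr R in
  let newn w := reach K r w /\ ~ reach K l w in
  let red x := if x == phi l then psi r else x in
  (forall w, reach K r w -> reach K l w -> psi w = phi w) /\
  (forall w, newn w -> ~ node (tgr G) (psi w)) /\
  (forall w1 w2, newn w1 -> newn w2 -> psi w1 = psi w2 -> w1 = w2) /\
  (forall x, node H2 x <-> node (tgr G) x \/ exists w, newn w /\ psi w = x) /\
  (forall x, node (tgr G) x ->
     lab H2 x = lab (tgr G) x /\ att H2 x = map red (att (tgr G) x)) /\
  (forall w, newn w ->
     lab H2 (psi w) = lab K w /\ att H2 (psi w) = map (fun y => red (psi y)) (att K w)).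

(* rewrite step G ->_GRS H (garbage collection = restriction to the new root) *)
Definition step (GRS : rule -> Prop) (G H : tgraph) : Prop :=
  exists R, GRS R /\ exists phi, lhom (tgr (lhs R)) (tgr G) phi /\
  exists psi H2, build_redirect R phi psi G H2 /\
  tgeq H (TG (restr H2 (if root G == phi (rl R) then psi (rr R) else root G))
             (if root G == phi (rl R) then psi (rr R) else root G)).

Inductive steps (GRS : rule -> Prop) : tgraph -> tgraph -> Prop :=
| steps_refl G : steps GRS G G
| steps_cons G G' H : step GRS G G' -> steps GRS G' H -> steps GRS G H.

End TermGraphs.

(* Normal arguments are never rewritten.  The invariant [nrm_invariant] says
   that for every node x of the current graph and every normal successor u of
   x, the graph below u is an unchanged copy of G0|u, and u is reachable from a
   normal argument of the root of G0.  It holds for G0 because G0 is basic: its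
   arguments are constructor terms, which have no normal successors.  A rewrite
   step preserves it.  The copied graphs contain only constructors, hence no
   redex, so redirection leaves them intact.  And precedence termination with
   argument separation forces every normal successor of a node built from the
   right-hand side to lie below a normal argument of the left-hand side, i.e.
   below a normal successor of the redex, where the invariant already applies. *)

From Pilot Require Import Defs.
From mathcomp Require Import all_boot.
From Stdlib Require Import Classical.
(* [all_boot] exports [fingraph.root], which shadows [Defs.root]. *)
Import Defs.

Set Implicit Arguments.
Unset Strict Implicit.
Unset Printing Implicit Defensive.

#[local] Hint Resolve reach_refl : core.

Section Reachability.
Variable F : finType.
Implicit Types G : lgraph F.

Lemma reach_trans G a b c : reach G a b -> reach G b c -> reach G a c.
Proof. by elim=> // v u w Hu _ IH /IH; apply: reach_step. Qed.

Lemma reach_succ G a b : b \in att G a -> reach G a b.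
Proof. by move=> Hb; apply: reach_step Hb (reach_refl _ _). Qed.

Lemma reach_rcons G a b c : reach G a b -> c \in att G b -> reach G a c.
Proof. by move=> Rab /reach_succ; apply: reach_trans. Qed.

Lemma reachP G a b :
  reach G a b -> a = b \/ exists2 c, c \in att G a & reach G c b.
Proof. by case=> [|x y z Hy Ryz]; [left | right; exists y]. Qed.

Lemma reach_att_ext G1 G2 a b : att G1 = att G2 -> reach G1 a b -> reach G2 a b.
Proof. by move=> E; elim=> // v u w Hu _; apply: reach_step; rewrite -E. Qed.

Lemma reach_restr G v a b : reach (restr G v) a b <-> reach G a b.
Proof. by split; apply: reach_att_ext. Qed.

Lemma reach_agree G1 G2 a :
  (forall y, reach G1 a y -> reach G2 a y -> att G1 y = att G2 y) ->
  forall y, reach G1 a y -> reach G2 a y.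
Proof.
move=> agree y Ray.
suff: forall b, reach G1 b y -> reach G1 a b -> reach G2 a b -> reach G2 a y.
  by move=> /(_ a Ray); apply.
move=> b; elim=> // v u w Hu _ IH R1v R2v.
have Hu2 : u \in att G2 v by rewrite -agree.
exact: IH (reach_rcons R1v Hu) (reach_rcons R2v Hu2).
Qed.

Definition succ_closed G := forall x y, node G x -> y \in att G x -> node G y.

Lemma succ_closed_reach G a b : succ_closed G -> node G a -> reach G a b -> node G b.
Proof. by move=> clG Na Rab; elim: Rab Na => // v u w Hu _ IH /clG /(_ Hu). Qed.

End Reachability.

Section NormalAndSafeSuccessors.
Variables (F : finType) (normal : F -> nat -> bool).
Implicit Types G : lgraph F.

Lemma nrm_att G v u : u \in nrm normal G v -> u \in att G v.
Proof.
rewrite /nrm; case: (lab G v) => [f|//] /mapP[i].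
by rewrite mem_filter mem_iota add0n => /andP[_ /andP[_ ?]] ->; apply: mem_nth.
Qed.

Lemma safe_att G v u : u \in safe normal G v -> u \in att G v.
Proof.
rewrite /safe; case: (lab G v) => [f|//] /mapP[i].
by rewrite mem_filter mem_iota add0n => /andP[_ /andP[_ ?]] ->; apply: mem_nth.
Qed.

Lemma att_nrm_or_safe G v u f : lab G v = Some f -> u \in att G v ->
  u \in nrm normal G v \/ u \in safe normal G v.
Proof.
move=> Lv Hu; rewrite /nrm /safe Lv -(nth_index 0 Hu).
have Hi : index u (att G v) < size (att G v) by rewrite index_mem.
by case Ni: (normal f (index u (att G v))); [left | right];
  apply: map_f; rewrite mem_filter mem_iota add0n Hi ?Ni.
Qed.

Lemma nrm_map G1 G2 x1 x2 (f : nat -> nat) :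
  lab G2 x2 = lab G1 x1 -> att G2 x2 = map f (att G1 x1) ->
  nrm normal G2 x2 = map f (nrm normal G1 x1).
Proof.
move=> Lx Ax; rewrite /nrm Lx; case: (lab G1 x1) => [g|//].
rewrite Ax size_map -map_comp; apply/eq_in_map => i.
by rewrite mem_filter mem_iota add0n => /andP[_ Hi] /=; rewrite (nth_map 0).
Qed.

Lemma nrm_ext G1 G2 x : lab G2 x = lab G1 x -> att G2 x = att G1 x ->
  nrm normal G2 x = nrm normal G1 x.
Proof. by move=> Lx Ax; rewrite (nrm_map Lx (etrans Ax (esym (map_id _)))) map_id. Qed.

Lemma nrm_constructor (isC : pred F) G x c :
  (forall c i, isC c -> ~~ normal c i) ->
  lab G x = Some c -> isC c -> nrm normal G x = [::].
Proof.
move=> sep_C Lx Cc; rewrite /nrm Lx.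
by rewrite (eq_in_filter (a2 := pred0)) ?filter_pred0 // => i _; apply/negbTE/sep_C.
Qed.

Lemma nrmsub_reach (H G : tgraph F) y : nrmsub normal (restr_tg H y) G ->
  exists2 z, z \in nrm normal (tgr G) (root G) & reach (tgr G) z y.
Proof. by case=> z [Hz [y' [Ry' [_ /= ->]]]]; exists z. Qed.

Lemma SP_node (G : tgraph F) v : node (tgr G) (root G) -> succ_closed (tgr G) ->
  SP normal G v -> node (tgr G) v.
Proof. by move=> Nr clG; elim=> // x u _ Nx /safe_att; apply: clG. Qed.

End NormalAndSafeSuccessors.

Section PrecedenceTermination.
Variables (F : finType) (normal : F -> nat -> bool) (prec : rel F).

Section NestedInduction.
Variable P : tgraph F -> tgraph F -> Prop.

Hypothesis P_sub : forall H G u, labs_below prec H G -> u \in att (tgr G) (root G) ->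
  tgeq H (restr_tg G u) \/ pt normal prec H (restr_tg G u) /\ P H (restr_tg G u) ->
  P H G.

Hypothesis P_arg : forall H G, labs_below prec H G -> lab (tgr H) (root H) <> None ->
  (forall v, v \in nrm normal (tgr H) (root H) -> nrmsub normal (restr_tg H v) G) ->
  (forall v, v \in safe normal (tgr H) (root H) ->
     pt normal prec (restr_tg H v) G /\ P (restr_tg H v) G) ->
  P H G.

(* The automatic induction principle of [pt] gives no hypothesis for the
   occurrence of [pt] nested in a disjunction. *)
Fixpoint pt_nested_ind H G (p : pt normal prec H G) {struct p} : P H G :=
  match p with
  | pt_sub H G u below Hu sub =>
      P_sub below Hu match sub with
        | or_introl e => or_introl e
        | or_intror q => or_intror (conj q (pt_nested_ind q)) end
  | pt_arg H G below Hr Hn Hs =>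
      P_arg below Hr Hn (fun v Hv => conj (Hs v Hv) (pt_nested_ind (Hs v Hv)))
  end.

End NestedInduction.

Definition on_graph (K : lgraph F) (G : tgraph F) :=
  lab (tgr G) = lab K /\ att (tgr G) = att K.

Lemma nrm_on_graph K G : on_graph K G -> nrm normal (tgr G) = nrm normal K.
Proof. by case=> LG AG; rewrite /nrm LG AG. Qed.

Variable isC : pred F.
Hypothesis prec_min : forall f c, isC c -> ~~ prec f c.
Variables (K : lgraph F) (l : nat).
Hypothesis args_constructor :
  forall v, v \in att K l -> forall x c, reach K v x -> lab K x = Some c -> isC c.

Lemma pt_below_args_in_lhs H G : pt normal prec H G -> on_graph K H -> on_graph K G ->
  node (tgr H) (root H) -> (exists2 v, v \in att K l & reach K v (root G)) ->
  forall w, reach K (root H) w -> reach K l w.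
Proof.
elim/pt_nested_ind: H G /.
- move=> H G u _ Hu [[_ /= rootH] | [_ IH]] oH oG NH [v Hv Rv] w Rw.
  + have Rlu : reach K l u by apply: reach_rcons (reach_step Hv Rv) _; rewrite -oG.2.
    by apply: reach_trans Rlu _; rewrite -rootH.
  + by apply: IH Rw => //; exists v => //; apply: reach_rcons Rv _; rewrite -oG.2.
- move=> H G below + _ _ oH oG NH [v Hv Rv].
  case LHr: (lab (tgr H) (root H)) => [f|//] _.
  have [g [LGr fg]] := below _ _ NH LHr.
  have Cg : isC g by apply: (args_constructor Hv Rv); rewrite -oG.1.
  by rewrite (negbTE (prec_min f Cg)) in fg.
Qed.

Lemma pt_nrm_below_lhs_nrm H G : pt normal prec H G -> on_graph K H -> on_graph K G ->
  node (tgr H) (root H) -> root G = l ->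
  forall w y, reach K (root H) w -> ~ reach K l w -> y \in nrm normal K w ->
  exists2 z, z \in nrm normal K l & reach K z y.
Proof.
elim/pt_nested_ind: H G /.
- move=> H G u _ Hu HuG oH oG NH rootG w y Rw nRw _; exfalso; apply: nRw.
  have Hu' : u \in att K l by rewrite -rootG -oG.2.
  case: HuG => [[_ /= rootH] | [ptH _]].
  + by apply: reach_step Hu' _; rewrite -rootH.
  + by apply: (pt_below_args_in_lhs ptH) Rw => //; exists u.
- move=> H G _ + Hn Hs oH oG NH rootG w y Rw nRw Hy.
  case LHr: (lab (tgr H) (root H)) => [f|//] _.
  have nrm_l : nrm normal (tgr G) (root G) = nrm normal K l
    by rewrite (nrm_on_graph oG) rootG.
  case: (reachP Rw) => [Ew | [c Hc Rc]].
  + have [|z Hz Rz] := nrmsub_reach (Hn y _); first by rewrite (nrm_on_graph oH) Ew.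
    by exists z; [rewrite -nrm_l | apply: reach_att_ext Rz; rewrite oG.2].
  + have Hc' : c \in att (tgr H) (root H) by rewrite oH.2.
    case: (att_nrm_or_safe normal LHr Hc') => Hc2; last exact: (Hs c Hc2).2 Rc nRw Hy.
    have [z Hz Rz] := nrmsub_reach (Hn c Hc2); exfalso; apply: nRw.
    have Hz' : z \in att K l by apply: (@nrm_att _ normal); rewrite -nrm_l.
    by apply: reach_step Hz' (reach_trans _ Rc); apply: reach_att_ext Rz; rewrite oG.2.
Qed.

End PrecedenceTermination.

Section Invariant.
Variables (F : finType) (normal : F -> nat -> bool) (isC : pred F) (G0 : tgraph F).
Hypothesis G0_basic : basic isC G0.

Record nrm_inherited (G : tgraph F) (a : nat) : Prop := NrmInherited {
  inherited_node : node (tgr G) a;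
  inherited_origin :
    exists2 w, w \in nrm normal (tgr G0) (root G0) & reach (tgr G0) w a;
  inherited_agree : forall y, reach (tgr G) a y ->
    lab (tgr G) y = lab (tgr G0) y /\ att (tgr G) y = att (tgr G0) y }.

Record nrm_invariant (G : tgraph F) : Prop := NrmInvariant {
  invariant_root : node (tgr G) (root G);
  invariant_closed : succ_closed (tgr G);
  invariant_nrm : forall x u, node (tgr G) x -> u \in nrm normal (tgr G) x ->
    nrm_inherited G u }.

Lemma inherited_reach G a y :
  nrm_inherited G a -> reach (tgr G) a y -> reach (tgr G0) a y.
Proof. by case=> _ _ agree; apply: reach_agree => z Rz _; apply: (agree z Rz).2. Qed.

Lemma inherited_constructor G a y c : nrm_inherited G a -> reach (tgr G) a y ->
  lab (tgr G) y = Some c -> isC c.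
Proof.
move=> inh Ray Ly; have R0ay := inherited_reach inh Ray.
case: inh => _ [w Hw Rwa] agree.
by apply: (G0_basic.2 _ (nrm_att Hw) _ _ (reach_trans Rwa R0ay)); rewrite -(agree y Ray).1.
Qed.

Lemma inherited_reach_closed G a b : succ_closed (tgr G) ->
  nrm_inherited G a -> reach (tgr G) a b -> nrm_inherited G b.
Proof.
move=> clG inh Rab; have R0ab := inherited_reach inh Rab.
case: inh => Na [w Hw Rwa] agree; split.
- exact: succ_closed_reach clG Na Rab.
- by exists w => //; apply: reach_trans Rwa R0ab.
- by move=> y Rby; apply/agree/(reach_trans Rab Rby).
Qed.

Lemma inherited_nrmsub G u : nrm_inherited G u -> nrmsub normal (restr_tg G u) G0.
Proof.
move=> inh; have R0 := inherited_reach inh.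
case: inh => _ [w Hw Rwu] agree; exists w; split=> //.
exists u; split=> //; split=> //; split=> x /=.
- split=> [/R0 /reach_restr // | /reach_restr R0x]; apply: reach_agree R0x => y R0y Ry.
  exact: (esym (agree y Ry).2).
- by move/agree.
Qed.

Lemma nrm_invariant_init (ar : F -> nat) : (forall c i, isC c -> ~~ normal c i) ->
  wf_tg ar G0 -> nrm_invariant G0.
Proof.
move=> sep_C [[_ [_ [clG0 _]]] [Nr reach_root]]; split=> // x u Nx Hu.
case: (reachP (reach_root x Nx)) => [Ex | [c Hc Rcx]].
- by subst x; split=> //; [apply: clG0 Nx (nrm_att Hu) | exists u].
- case Lx: (lab (tgr G0) x) Hu => [g|]; last by rewrite /nrm Lx.
  by rewrite (nrm_constructor sep_C Lx (G0_basic.2 c Hc x g Rcx Lx)).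
Qed.

Section RewriteStep.
Variables (ar : F -> nat) (prec : rel F).
Hypothesis prec_min : forall f c, isC c -> ~~ prec f c.
Variables (R : rule F) (phi psi : nat -> nat) (G H : tgraph F) (H2 : lgraph F).

Local Notation K := (rK R).
Local Notation l := (rl R).
Local Notation r := (rr R).
Local Notation redirect := (fun x => if x == phi l then psi r else x).
Local Notation new w := (reach K r w /\ ~ reach K l w).

Hypothesis R_constructor : constructor_rule ar isC R.
Hypothesis R_pt : pt normal prec (rhs R) (lhs R).
Hypothesis phi_hom : lhom (tgr (lhs R)) (tgr G) phi.
Hypothesis build : build_redirect R phi psi G H2.
Hypothesis H_collect : tgeq H (TG (restr H2 (redirect (root G))) (redirect (root G))).
Hypothesis G_inv : nrm_invariant G.

Let K_wf : wf_lg ar K := R_constructor.1.1.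
Let lhs_basic : basic isC (lhs R) := R_constructor.2.
Let psi_phi : forall w, reach K r w -> reach K l w -> psi w = phi w := build.1.
Let node_H2 : forall x, node H2 x <-> node (tgr G) x \/ exists w, new w /\ psi w = x
  := build.2.2.2.1.
Let old_H2 : forall x, node (tgr G) x ->
    lab H2 x = lab (tgr G) x /\ att H2 x = map redirect (att (tgr G) x)
  := build.2.2.2.2.1.
Let new_H2 : forall w, new w ->
    lab H2 (psi w) = lab K w /\ att H2 (psi w) = map (fun y => redirect (psi y)) (att K w)
  := build.2.2.2.2.2.

Lemma phi_node a : reach K l a -> node (tgr G) (phi a).
Proof. exact: phi_hom.1. Qed.

Lemma phi_lab a c : reach K l a -> lab K a = Some c ->
  lab (tgr G) (phi a) = Some c /\ att (tgr G) (phi a) = map phi (att K a).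
Proof. exact: phi_hom.2. Qed.

Lemma phi_reach a b : reach K l a -> reach K a b -> reach (tgr G) (phi a) (phi b).
Proof.
move=> Rla Rab; elim: Rab Rla => // v u w Hu _ IH Rlv.
case Lv: (lab K v) => [c|].
- apply: reach_step (IH (reach_rcons Rlv Hu)).
  by rewrite (phi_lab Rlv Lv).2; apply: map_f.
- have Nv := succ_closed_reach K_wf.2.2.1 R_constructor.1.2.1 Rlv.
  by move: Hu (K_wf.2.1 v Nv); rewrite Lv => /[swap] /size0nil ->.
Qed.

Lemma lhs_args_constructor v : v \in att K l ->
  forall x c, reach K v x -> lab K x = Some c -> isC c.
Proof. by move=> Hv x c /(reach_restr K l); apply: lhs_basic.2. Qed.

Lemma inherited_not_redex a : nrm_inherited G a ->
  forall y, reach (tgr G) a y -> y != phi l.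
Proof.
move=> inh y Ray; apply/eqP => Ey.
have [f [Lf Df]] := lhs_basic.1.
have Cf : isC f.
  by apply: (inherited_constructor inh Ray); rewrite Ey (phi_lab (reach_refl _ _) Lf).1.
by rewrite Cf in Df.
Qed.

Lemma inherited_redirect a : nrm_inherited G a -> redirect a = a.
Proof. by move=> inh /=; rewrite (negbTE (inherited_not_redex inh (reach_refl _ _))). Qed.

Lemma inherited_att_H2 a y : nrm_inherited G a -> reach (tgr G) a y ->
  att H2 y = att (tgr G) y.
Proof.
move=> inh Ray.
have Ny := succ_closed_reach (invariant_closed G_inv) (inherited_node inh) Ray.
rewrite (old_H2 Ny).2 -[RHS]map_id; apply/eq_in_map => b Hb /=.
by rewrite (negbTE (inherited_not_redex inh (reach_rcons Ray Hb))).
Qed.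

Lemma psi_node w : reach K r w -> node H2 (psi w).
Proof.
move=> Rrw; apply/node_H2; case: (classic (reach K l w)) => Rlw.
- by left; rewrite psi_phi //; apply: phi_node.
- by right; exists w.
Qed.

Lemma H2_closed : succ_closed H2.
Proof.
move=> x y /node_H2 [Nx | [w [[Rrw nRlw] <-]]].
- rewrite (old_H2 Nx).2 => /mapP[y0 Hy0 ->] /=.
  case: eqP => _; first exact: psi_node (reach_refl _ _).
  by apply/node_H2; left; apply: (invariant_closed G_inv) Nx Hy0.
- rewrite (new_H2 (conj Rrw nRlw)).2 => /mapP[c Hc ->] /=.
  case: eqP => _; first exact: psi_node (reach_refl _ _).
  exact: psi_node (reach_rcons Rrw Hc).
Qed.

Let H_node x : node (tgr H) x <-> reach H2 (redirect (root G)) x := H_collect.1.1 x.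
Let H_lab_att x : node (tgr H) x ->
  lab (tgr H) x = lab H2 x /\ att (tgr H) x = att H2 x := H_collect.1.2 x.

Lemma H_node_H2 x : node (tgr H) x -> node H2 x.
Proof.
move=> /H_node Rx; apply: succ_closed_reach H2_closed _ Rx => /=.
case: eqP => _; first exact: psi_node (reach_refl _ _).
by apply/node_H2; left; apply: invariant_root G_inv.
Qed.

Lemma H_closed : succ_closed (tgr H).
Proof.
move=> x y Nx; rewrite (H_lab_att Nx).2 => Hy.
by apply/H_node; apply: reach_rcons Hy; apply/H_node.
Qed.

Lemma inherited_transfer a : nrm_inherited G a -> node (tgr H) a -> nrm_inherited H a.
Proof.
move=> inh Na.
have agree_H y : reach (tgr H) a y -> reach (tgr G) a y ->
    lab (tgr H) y = lab (tgr G) y /\ att (tgr H) y = att (tgr G) y.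
  move=> RHy RGy; have NHy := succ_closed_reach H_closed Na RHy.
  have NGy := succ_closed_reach (invariant_closed G_inv) (inherited_node inh) RGy.
  by case: (H_lab_att NHy) => -> ->; rewrite (old_H2 NGy).1 (inherited_att_H2 inh RGy).
have RHG : forall y, reach (tgr H) a y -> reach (tgr G) a y.
  by apply: reach_agree => y RHy RGy; apply: (agree_H y RHy RGy).2.
case: inh => _ origin agree; split=> // y RHy.
have RGy := RHG y RHy; have [-> ->] := agree_H y RHy RGy; exact: agree.
Qed.

Lemma nrm_H2_old_inherited x u : node (tgr G) x -> u \in nrm normal H2 x ->
  nrm_inherited G u.
Proof.
move=> Nx; rewrite (nrm_map _ (old_H2 Nx).1 (old_H2 Nx).2) => /mapP[u0 Hu0 ->].
by have inh := invariant_nrm G_inv Nx Hu0; rewrite inherited_redirect.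
Qed.

Lemma new_nrm_below_lhs_nrm w y : new w -> y \in nrm normal K w ->
  exists2 z, z \in nrm normal K l & reach K z y.
Proof.
by case=> Rrw nRlw; apply: (pt_nrm_below_lhs_nrm prec_min lhs_args_constructor R_pt).
Qed.

Lemma nrm_H2_new_inherited w u : new w -> u \in nrm normal H2 (psi w) ->
  nrm_inherited G u.
Proof.
move=> nw; rewrite (nrm_map _ (new_H2 nw).1 (new_H2 nw).2) => /mapP[y Hy ->].
have [z Hz Rzy] := new_nrm_below_lhs_nrm nw Hy.
have Hzl : z \in att K l := nrm_att Hz.
have phi_z : phi z \in nrm normal (tgr G) (phi l).
  have [f [Lf _]] := lhs_basic.1; have [Lpl Apl] := phi_lab (reach_refl _ _) Lf.
  by rewrite (nrm_map _ (etrans Lpl (esym Lf)) Apl); apply: map_f.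
have inh_z := invariant_nrm G_inv (phi_node (reach_refl _ _)) phi_z.
have inh_y := inherited_reach_closed (invariant_closed G_inv) inh_z
  (phi_reach (reach_succ Hzl) Rzy).
rewrite psi_phi ?(inherited_redirect inh_y) //; first exact: reach_rcons nw.1 (nrm_att Hy).
exact: reach_step Hzl Rzy.
Qed.

Lemma nrm_invariant_step : nrm_invariant H.
Proof.
split; [by apply/H_node; rewrite H_collect.2 | exact: H_closed |] => x u Nx Hu.
apply: inherited_transfer (H_closed Nx (nrm_att Hu)).
rewrite (nrm_ext _ (H_lab_att Nx).1 (H_lab_att Nx).2) in Hu.
case/node_H2: (H_node_H2 Nx) Hu => [Nx' | [w [nw <-]]].
- exact: nrm_H2_old_inherited.
- exact: nrm_H2_new_inherited.
Qed.

End RewriteStep.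

Lemma nrm_invariant_steps (ar : F -> nat) (prec : rel F) (GRS : rule F -> Prop) G G' :
  (forall f c, isC c -> ~~ prec f c) ->
  (forall R, GRS R -> constructor_rule ar isC R) ->
  (forall R, GRS R -> pt normal prec (rhs R) (lhs R)) ->
  steps GRS G G' -> nrm_invariant G -> nrm_invariant G'.
Proof.
move=> prec_min GRS_cons GRS_pt.
elim=> // G1 G2 G3 [R [GR [phi [hom [psi [H2 [build collect]]]]]]] _ IH inv1.
exact/IH/(nrm_invariant_step prec_min (GRS_cons R GR) (GRS_pt R GR) hom build collect).
Qed.

End Invariant.

Theorem mainTheorem4
  (F : finType) (ar : F -> nat) (isC : pred F)
  (normal : F -> nat -> bool) (prec : rel F) (GRS : rule F -> Prop)
  (sep_C : forall c i, isC c -> ~~ normal c i)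
  (prec_irr : irreflexive prec) (prec_trans : transitive prec)
  (prec_wf : well_founded (fun a b => prec a b))
  (prec_min : forall f c, isC c -> ~~ prec f c)
  (GRS_cons : forall R, GRS R -> constructor_rule ar isC R)
  (GRS_pt : forall R, GRS R -> pt normal prec (rhs R) (lhs R))
  (G0 G : tgraph F)
  (G0_wf : wf_tg ar G0) (G0_closed : closed_tg G0) (G0_basic : basic isC G0)
  (red : steps GRS G0 G) :
  forall v u, SP normal G v -> u \in nrm normal (tgr G) v ->
    nrmsub normal (restr_tg G u) G0.
Proof.
move=> v u Sv Hu.
have inv := nrm_invariant_steps G0_basic prec_min GRS_cons GRS_pt red
  (nrm_invariant_init G0_basic sep_C G0_wf).
have Nv := SP_node (invariant_root inv) (invariant_closed inv) Sv.
exact: inherited_nrmsub (invariant_nrm inv Nv Hu).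
Qed.
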